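(* Let $a,b,c,p\in\mathbb{C}$ with $-c\notin\mathbb{N}\cup\{0\}$. Define $(u_n)$ and $(v_n)$ by $u_0=1$, $u_1=\frac{ab}{c}+p$, $u_2=\frac{a(1+a)b(1+b)}{2c(1+c)}+\frac{abp}{c}+\frac{p^2}{2}$, $v_0=1$, $v_1=\frac{ab}{c}-p$, $v_2=\frac{a(1+a)b(1+b)}{2c(1+c)}-\frac{abp}{c}+\frac{p^2}{2}$, and for all integers $n\ge2$, \[ u_{n+1}=\frac{(a+n)(b+n)+p(c+2n)}{(n+1)(c+n)}u_n-\frac{p(a+b+2n+p-1)}{(n+1)(c+n)}u_{n-1}+\frac{p^2}{(n+1)(c+n)}u_{n-2}, \] \[ v_{n+1}=\frac{(a+n)(b+n)-p(c+2n)}{(n+1)(c+n)}v_n+\frac{p(a+b+2n-p-1)}{(n+1)(c+n)}v_{n-1}+\frac{p^2}{(n+1)(c+n)}v_{n-2}. \] Then \[ \cosh(pz)F(a,b;c;z)=\sum_{n=0}^\infty\frac{u_n+v_n}{2}z^n,\qquad |z|<1. \]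
   Context: For $a\in\mathbb{C}$, $(a)_n=a(a+1)\cdots(a+n-1)$ denotes the Pochhammer symbol, with $(a)_0=1$. For $a,b,c\in\mathbb{C}$ with $-c\notin\mathbb{N}\cup\{0\}$, the Gaussian hypergeometric function is $F(a,b;c;z)=\sum_{n=0}^\infty \frac{(a)_n(b)_n}{(c)_n\,n!}z^n$, $|z|<1$. *)

From Stdlib Require Import Reals Factorial.
From Coquelicot Require Import Coquelicot.
Open Scope C_scope.

(* Sum of a complex series, computed componentwise (real and imaginary
   parts); it equals the sum of the series whenever the series converges. *)
Definition CSeries (u : nat -> C) : C :=
  (Series (fun n => Re (u n)), Series (fun n => Im (u n))).

Fixpoint poch (a : C) (n : nat) : C :=
  match n with
  | O => 1
  | S m => poch a m * (a + RtoC (INR m))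
  end.

Definition hypF (a b c z : C) : C :=
  CSeries (fun n => poch a n * poch b n / (poch c n * RtoC (INR (fact n))) * z ^ n).

Definition ccosh (w : C) : C :=
  CSeries (fun k => w ^ (2 * k) / RtoC (INR (fact (2 * k)))).

(* Generic third-order recurrence: x_0, x_1, x_2 given, and
   x_{N+1} = f N x_N x_{N-1} x_{N-2} for N >= 2.
   rec3_aux n = (x_n, x_{n+1}, x_{n+2}). *)
Fixpoint rec3_aux (x0 x1 x2 : C) (f : nat -> C -> C -> C -> C) (n : nat)
  : C * C * C :=
  match n with
  | O => (x0, x1, x2)
  | S m =>
      let '(y0, y1, y2) := rec3_aux x0 x1 x2 f m in
      (y1, y2, f (m + 2)%nat y2 y1 y0)
  end.

Definition rec3 (x0 x1 x2 : C) (f : nat -> C -> C -> C -> C) (n : nat) : C :=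
  fst (fst (rec3_aux x0 x1 x2 f n)).

Definition useq (a b c p : C) : nat -> C :=
  rec3 1
       (a * b / c + p)
       (a * (1 + a) * b * (1 + b) / (2 * c * (1 + c)) + a * b * p / c + p ^ 2 / 2)
       (fun N un un1 un2 =>
          let n := RtoC (INR N) in
          ((a + n) * (b + n) + p * (c + 2 * n)) / ((n + 1) * (c + n)) * un
          - p * (a + b + 2 * n + p - 1) / ((n + 1) * (c + n)) * un1
          + p ^ 2 / ((n + 1) * (c + n)) * un2).

Definition vseq (a b c p : C) : nat -> C :=
  rec3 1
       (a * b / c - p)
       (a * (1 + a) * b * (1 + b) / (2 * c * (1 + c)) - a * b * p / c + p ^ 2 / 2)
       (fun N vn vn1 vn2 =>
          let n := RtoC (INR N) in
          ((a + n) * (b + n) - p * (c + 2 * n)) / ((n + 1) * (c + n)) * vn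
          + p * (a + b + 2 * n - p - 1) / ((n + 1) * (c + n)) * vn1
          + p ^ 2 / ((n + 1) * (c + n)) * vn2).

(* The Taylor coefficients of e^{pz} F(a,b;c;z) are the Cauchy products
   sum_j e_j f_{n-j} of the exponential coefficients e_j = p^j/j! with the
   hypergeometric coefficients f_i, and those of e^{-pz} F(a,b;c;z) are the same
   with -p.  The first-order relations (j+1) e_{j+1} = p e_j and
   (i+1)(c+i) f_{i+1} = (a+i)(b+i) f_i combine into the stated third-order
   recurrences, so these Cauchy products are u_n and v_n.  For |z| < 1 the
   hypergeometric series converges absolutely by the ratio test, hence its Cauchy
   product with the cosh series, whose coefficients are (u_n + v_n)/2 z^n, sums to
   cosh(pz) F(a,b;c;z). *)

From Stdlib Require Import Reals Factorial Lia Lra.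
From Coquelicot Require Import Coquelicot.
Open Scope C_scope.

Lemma Re_sum_n (u : nat -> C) n : Re (sum_n u n) = sum_n (fun k => Re (u k)) n.
Proof.
  induction n as [|n IH]; [now rewrite !sum_O|].
  rewrite !sum_Sn, <- IH. reflexivity.
Qed.

Lemma Im_sum_n (u : nat -> C) n : Im (sum_n u n) = sum_n (fun k => Im (u k)) n.
Proof.
  induction n as [|n IH]; [now rewrite !sum_O|].
  rewrite !sum_Sn, <- IH. reflexivity.
Qed.

Lemma Im_le_Cmod (x : C) : (Rabs (Im x) <= Cmod x)%R.
Proof.
  destruct (Rle_or_lt (Rabs (Im x)) (Cmod x)) as [H|H]; [exact H|].
  assert (E := Cmod2_alt x). assert (E2 := pow2_abs (Im x)).
  assert (P := Cmod_ge_0 x). simpl in *. nra.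
Qed.

Lemma is_series_C_Re_Im (u : nat -> C) (l : C) :
  is_series (V := C_NormedModule) u l <->
  is_series (fun n => Re (u n)) (Re l) /\ is_series (fun n => Im (u n)) (Im l).
Proof.
  unfold is_series. split.
  - intros H. split; apply filterlim_locally; intros eps;
      generalize (proj1 (filterlim_locally _ _) H eps); apply filter_imp;
      intros n [h1 h2]; [rewrite <- Re_sum_n | rewrite <- Im_sum_n]; assumption.
  - intros [H1 H2]. apply filterlim_locally. intros eps.
    generalize (filter_and _ _ (proj1 (filterlim_locally _ _) H1 eps)
                               (proj1 (filterlim_locally _ _) H2 eps)).
    apply filter_imp. intros n [h1 h2].
    rewrite <- Re_sum_n in h1. rewrite <- Im_sum_n in h2. split; assumption.
Qed.

Lemma CSeries_unique (u : nat -> C) (l : C) :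
  is_series (V := C_NormedModule) u l -> CSeries u = l.
Proof.
  intros [H1 H2]%is_series_C_Re_Im. unfold CSeries.
  rewrite (is_series_unique _ _ H1), (is_series_unique _ _ H2). now destruct l.
Qed.

Lemma CSeries_correct (u : nat -> C) :
  ex_series (fun n => Cmod (u n)) -> is_series (V := C_NormedModule) u (CSeries u).
Proof.
  intros H.
  assert (Hu : ex_series (V := C_NormedModule) u).
  { apply (ex_series_le (V := C_CompleteNormedModule) u (fun n => Cmod (u n))); auto using Rle_refl. }
  destruct Hu as [l Hl]. rewrite (CSeries_unique u l Hl). exact Hl.
Qed.

Lemma sum_n_Cplus (u v : nat -> C) (n : nat) :
  sum_n (fun k => u k + v k) n = sum_n u n + sum_n v n.
Proof. exact (sum_n_plus u v n). Qed.

Lemma sum_n_Cmult_l (x : C) (u : nat -> C) (n : nat) :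
  sum_n (fun k => x * u k) n = x * sum_n u n.
Proof. exact (sum_n_mult_l x u n). Qed.

Lemma sum_n_C_ext_loc (u v : nat -> C) (n : nat) :
  (forall k, (k <= n)%nat -> u k = v k) -> sum_n u n = sum_n v n.
Proof. exact (sum_n_ext_loc u v n). Qed.

Lemma sum_n_S_l {G : AbelianMonoid} (g : nat -> G) (n : nat) :
  sum_n g (S n) = plus (g O) (sum_n (fun k => g (S k)) n).
Proof. unfold sum_n. rewrite sum_Sn_m, <- sum_n_m_S by lia. reflexivity. Qed.

Lemma is_series_C_mult (h g : nat -> C) (lh lg : C) :
  is_series (V := C_NormedModule) h lh -> is_series (V := C_NormedModule) g lg ->
  ex_series (fun n => Cmod (h n)) -> ex_series (fun n => Cmod (g n)) ->
  is_series (V := C_NormedModule) (fun n => sum_n (fun j => h j * g (n - j)%nat) n) (lh * lg).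
Proof.
  intros [Hh1 Hh2]%is_series_C_Re_Im [Hg1 Hg2]%is_series_C_Re_Im Ah Ag.
  assert (abs : forall u : nat -> C, ex_series (fun n => Cmod (u n)) ->
    ex_series (fun n => Rabs (Re (u n))) /\ ex_series (fun n => Rabs (Im (u n)))).
  { intros u Hu. split; apply (ex_series_le (V := R_CompleteNormedModule) _ (fun n => Cmod (u n))); auto;
      intros n; unfold norm; simpl; rewrite Rabs_Rabsolu; [apply re_le_Cmod | apply Im_le_Cmod]. }
  destruct (abs h Ah) as [Ah1 Ah2], (abs g Ag) as [Ag1 Ag2].
  apply is_series_C_Re_Im. split.
  - eapply is_series_ext; [| exact (is_series_minus _ _ _ _
      (is_series_mult _ _ _ _ Hh1 Hg1 Ah1 Ag1) (is_series_mult _ _ _ _ Hh2 Hg2 Ah2 Ag2))].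
    intros n. rewrite Re_sum_n, sum_n_Reals. unfold minus, plus, opp; simpl.
    rewrite <- Rminus_def, <- minus_sum. apply sum_eq. reflexivity.
  - eapply is_series_ext; [| exact (is_series_plus _ _ _ _
      (is_series_mult _ _ _ _ Hh1 Hg2 Ah1 Ag2) (is_series_mult _ _ _ _ Hh2 Hg1 Ah2 Ag1))].
    intros n. rewrite Im_sum_n, sum_n_Reals. unfold plus; simpl.
    rewrite <- plus_sum. apply sum_eq. reflexivity.
Qed.

Lemma ex_series_ratio_le (u : nat -> R) (r : R) :
  (0 <= r < 1)%R -> (forall n, 0 <= u n)%R ->
  eventually (fun n => u (S n) <= r * u n)%R -> ex_series u.
Proof.
  intros [r0 r1] u0 [N HN].
  assert (geom : forall k, (u (N + k)%nat <= u N * r ^ k)%R).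
  { induction k as [|k IH]; [rewrite Nat.add_0_r; simpl; lra|].
    rewrite Nat.add_succ_r. eapply Rle_trans; [apply HN; lia|]. simpl. nra. }
  apply (ex_series_incr_n _ N).
  apply (ex_series_le (V := R_CompleteNormedModule) _ (fun k => u N * r ^ k)%R).
  - intros k. unfold norm; simpl. rewrite Rabs_pos_eq; auto.
  - apply (ex_series_scal (K := R_AbsRing) (V := R_NormedModule) (u N) (fun k => r ^ k)%R).
    apply ex_series_geom. rewrite Rabs_pos_eq; lra.
Qed.

Lemma RtoC_INR_S (n : nat) : RtoC (INR (S n)) = RtoC (INR n) + 1.
Proof. now rewrite S_INR, RtoC_plus. Qed.

Lemma RtoC_INR_S_neq0 (n : nat) : RtoC (INR n) + 1 <> 0.
Proof.
  rewrite <- RtoC_INR_S. intros E. apply RtoC_inj in E. revert E. apply not_0_INR. lia.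
Qed.

Lemma RtoC_INR_fact_neq0 (n : nat) : RtoC (INR (fact n)) <> 0.
Proof. intros E. apply RtoC_inj in E. exact (INR_fact_neq_0 n E). Qed.

Lemma Cmod_INR (n : nat) : Cmod (RtoC (INR n)) = INR n.
Proof. rewrite Cmod_R. apply Rabs_pos_eq, pos_INR. Qed.

Lemma Cmod_plus_INR_le (x : C) (n : nat) : (Cmod (x + RtoC (INR n)) <= Cmod x + INR n)%R.
Proof. rewrite <- (Cmod_INR n) at 2. apply Cmod_triangle. Qed.

Lemma Cmod_plus_INR_ge (x : C) (n : nat) : (INR n - Cmod x <= Cmod (x + RtoC (INR n)))%R.
Proof.
  assert (T := Cmod_triangle (x + RtoC (INR n)) (- x)).
  replace (x + RtoC (INR n) + - x) with (RtoC (INR n)) in T by ring.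
  rewrite Cmod_INR, Cmod_opp in T. lra.
Qed.

Lemma eventually_quadratic_le (t r A B C : R) : (t < r)%R ->
  eventually (fun n => t * ((A + INR n) * (B + INR n)) <= r * (INR (S n) * (INR n - C)))%R.
Proof.
  intros htr.
  set (d := (r - t)%R). set (L := (r * (1 - C) - t * (A + B))%R). set (M := (r * C + t * A * B)%R).
  assert (hd : (0 < d)%R) by (unfold d; lra).
  (* once d (x - 1) >= |L| + |M|, the leading term d x^2 of the difference of
     the two sides dominates L x - M *)
  destruct (INR_unbounded ((Rabs L + Rabs M) / d + 1)) as [N HN].
  exists N. intros n hn. rewrite S_INR. set (x := INR n).
  assert (hx : ((Rabs L + Rabs M) / d + 1 < x)%R).
  { apply Rlt_le_trans with (INR N); [lra | apply le_INR, hn]. }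
  assert (hLM : (0 <= Rabs L + Rabs M)%R) by (generalize (Rabs_pos L) (Rabs_pos M); lra).
  assert (hq : (0 <= (Rabs L + Rabs M) / d)%R) by (apply Rdiv_le_0_compat; lra).
  assert (hdx : (Rabs L + Rabs M <= d * (x - 1))%R).
  { replace (Rabs L + Rabs M)%R with (d * ((Rabs L + Rabs M) / d))%R by (field; lra).
    apply Rmult_le_compat_l; lra. }
  assert (hx0 : (0 <= x)%R) by lra.
  assert (h1 : ((Rabs L + Rabs M) * x <= d * (x - 1) * x)%R) by (apply Rmult_le_compat_r; lra).
  assert (hL : (- L * x <= Rabs L * x)%R).
  { apply Rmult_le_compat_r; [lra|]. rewrite <- Rabs_Ropp. apply Rle_abs. }
  assert (hM : (M <= Rabs M * x)%R).
  { assert (M <= Rabs M)%R by apply Rle_abs. assert (0 <= Rabs M)%R by apply Rabs_pos. nra. }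
  assert (E : (r * ((x + 1) * (x - C)) - t * ((A + x) * (B + x)) = d * x * x + L * x - M)%R)
    by (unfold d, L, M; ring).
  nra.
Qed.

Definition conv (e f : nat -> C) (n : nat) : C :=
  sum_n (fun j => e j * f (n - j)%nat) n.

Lemma conv_ext_l (e e' f : nat -> C) (n : nat) :
  (forall j, e j = e' j) -> conv e f n = conv e' f n.
Proof. intros H. unfold conv. apply sum_n_ext. intros j. now rewrite H. Qed.

Lemma conv_S_l (e f : nat -> C) (n : nat) :
  e O = 0 -> conv e f (S n) = conv (fun j => e (S j)) f n.
Proof.
  intros e0. unfold conv. rewrite sum_n_S_l, e0.
  change (0 * f (S n - 0)%nat + conv (fun j => e (S j)) f n = conv (fun j => e (S j)) f n).
  ring.
Qed.

Lemma conv_S_r (e f : nat -> C) (n : nat) :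
  f O = 0 -> conv e f (S n) = conv e (fun i => f (S i)) n.
Proof.
  intros f0. unfold conv. rewrite sum_Sn, Nat.sub_diag, f0.
  change (sum_n (fun j => e j * f (S n - j)%nat) n + e (S n) * 0
          = sum_n (fun j => e j * f (S (n - j))) n).
  rewrite Cmult_0_r, Cplus_0_r. apply sum_n_ext_loc. intros j hj.
  now replace (S n - j)%nat with (S (n - j)) by lia.
Qed.

Lemma conv_scal_l (x : C) (e f : nat -> C) (n : nat) :
  conv (fun j => x * e j) f n = x * conv e f n.
Proof.
  unfold conv. rewrite <- (sum_n_mult_l (K := C_Ring)).
  apply sum_n_ext. intros j. unfold mult; simpl. ring.
Qed.

Definition expc (p : C) (k : nat) : C := p ^ k / RtoC (INR (fact k)).

Lemma expc_S (p : C) (k : nat) : RtoC (INR (S k)) * expc p (S k) = p * expc p k.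
Proof.
  unfold expc. change (fact (S k)) with (S k * fact k)%nat.
  rewrite mult_INR, RtoC_mult, Cpow_S.
  field. split; [apply RtoC_INR_fact_neq0 | rewrite RtoC_INR_S; apply RtoC_INR_S_neq0].
Qed.

Lemma expc_mult_pow (p z : C) (k : nat) : expc (p * z) k = expc p k * z ^ k.
Proof. unfold expc. rewrite Cpow_mult_l. unfold Cdiv. ring. Qed.

Lemma conv_index_expc (p : C) (f : nat -> C) (n : nat) :
  conv (fun j => RtoC (INR j) * expc p j) f (S n) = p * conv (expc p) f n.
Proof.
  rewrite conv_S_l by (simpl; ring). rewrite <- conv_scal_l.
  apply conv_ext_l. apply expc_S.
Qed.

Lemma conv_index2_expc (p : C) (f : nat -> C) (n : nat) :
  conv (fun j => RtoC (INR j) * (RtoC (INR j) - 1) * expc p j) f (S (S n))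
  = p ^ 2 * conv (expc p) f n.
Proof.
  rewrite conv_S_l by (simpl; ring).
  transitivity (conv (fun j => p * (RtoC (INR j) * expc p j)) f (S n)).
  - apply conv_ext_l. intros j.
    replace (p * (RtoC (INR j) * expc p j)) with (RtoC (INR j) * (p * expc p j)) by ring.
    rewrite <- expc_S, RtoC_INR_S. ring.
  - rewrite (conv_scal_l p (fun j => RtoC (INR j) * expc p j)), conv_index_expc. ring.
Qed.

Lemma rec3_eq (x0 x1 x2 : C) (f : nat -> C -> C -> C -> C) (U : nat -> C) :
  U 0%nat = x0 -> U 1%nat = x1 -> U 2%nat = x2 ->
  (forall m, U (S (S (S m))) = f (m + 2)%nat (U (S (S m))) (U (S m)) (U m)) ->
  forall n, rec3 x0 x1 x2 f n = U n.
Proof.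
  intros H0 H1 H2 H3.
  assert (aux : forall n, rec3_aux x0 x1 x2 f n = (U n, U (S n), U (S (S n)))).
  { induction n as [|n IH]; simpl; [now rewrite H0, H1, H2 | now rewrite IH, H3]. }
  intros n. unfold rec3. now rewrite aux.
Qed.

Section Hypergeometric.

Variables a b c : C.
Hypothesis hc : forall n : nat, c <> - RtoC (INR n).

Definition hypc (n : nat) : C :=
  poch a n * poch b n / (poch c n * RtoC (INR (fact n))).

Lemma c_plus_INR_neq0 (n : nat) : c + RtoC (INR n) <> 0.
Proof. intros E. apply (hc n). rewrite <- (Cplus_0_l (- _)), <- E. ring. Qed.

Lemma poch_c_neq0 (n : nat) : poch c n <> 0.
Proof.
  induction n as [|n IH]; simpl; [apply C1_nz|].
  apply Cmult_neq_0; [exact IH | apply c_plus_INR_neq0].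
Qed.

Lemma hypc_S (n : nat) :
  RtoC (INR (S n)) * (c + RtoC (INR n)) * hypc (S n)
  = (a + RtoC (INR n)) * (b + RtoC (INR n)) * hypc n.
Proof.
  unfold hypc. simpl poch. change (fact (S n)) with (S n * fact n)%nat.
  rewrite mult_INR, RtoC_mult, RtoC_INR_S.
  assert (h1 := poch_c_neq0 n). assert (h2 := c_plus_INR_neq0 n).
  assert (h3 := RtoC_INR_fact_neq0 n). assert (h4 := RtoC_INR_S_neq0 n).
  field. tauto.
Qed.

Lemma hypc_pred (i : nat) :
  RtoC (INR i) * (c + RtoC (INR i) - 1) * hypc i
  = (a + RtoC (INR i) - 1) * (b + RtoC (INR i) - 1) * PS_incr_1 hypc i.
Proof.
  destruct i as [|k].
  - change (PS_incr_1 hypc 0) with (RtoC 0). change (INR 0) with 0%R. ring.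
  - change (PS_incr_1 hypc (S k)) with (hypc k).
    transitivity ((a + RtoC (INR k)) * (b + RtoC (INR k)) * hypc k).
    + rewrite <- hypc_S, RtoC_INR_S. ring.
    + rewrite RtoC_INR_S. ring.
Qed.

Lemma conv_expc_hypc_0 (p : C) : conv (expc p) hypc 0 = 1.
Proof. unfold conv, expc, hypc. rewrite sum_O. simpl. field. Qed.

Lemma conv_expc_hypc_1 (p : C) : conv (expc p) hypc 1 = a * b / c + p.
Proof.
  unfold conv, expc, hypc. rewrite sum_Sn, sum_O. unfold plus. simpl.
  assert (h0 := c_plus_INR_neq0 0). simpl in h0. rewrite Cplus_0_r in h0.
  field. exact h0.
Qed.

Lemma conv_expc_hypc_2 (p : C) : conv (expc p) hypc 2 =
  a * (1 + a) * b * (1 + b) / (2 * c * (1 + c)) + a * b * p / c + p ^ 2 / 2.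
Proof.
  unfold conv, expc, hypc. rewrite !sum_Sn, sum_O. unfold plus. simpl.
  assert (h0 := c_plus_INR_neq0 0). assert (h1 := c_plus_INR_neq0 1). simpl in h0, h1.
  rewrite Cplus_0_r in h0. rewrite RtoC_plus. field.
  split; [exact h0 | intros E; apply h1; rewrite Cplus_comm; exact E].
Qed.

Lemma hypc_recurrence_term (x : C) (i j : nat) :
  let n := RtoC (INR i) + RtoC (INR j) - 1 in
  let k := RtoC (INR j) in
  (n + 1) * (c + n) * (x * hypc i) + (a + b + 2 * n - 1) * (k * x * PS_incr_1 hypc i)
    + k * (k - 1) * x * hypc i
  = (a + n) * (b + n) * (x * PS_incr_1 hypc i) + (c + 2 * n) * (k * x * hypc i)
    + k * (k - 1) * x * PS_incr_1 hypc i.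
Proof.
  intros n k. apply Ceq_minus.
  (* since n + 1 = i + j, the coefficients of x f_i and x f_(i-1) collapse
     to i (c + i - 1) and (a + i - 1) (b + i - 1) *)
  transitivity (x * (RtoC (INR i) * (c + RtoC (INR i) - 1) * hypc i
    - (a + RtoC (INR i) - 1) * (b + RtoC (INR i) - 1) * PS_incr_1 hypc i)).
  - unfold n, k. ring.
  - rewrite hypc_pred. ring.
Qed.

Lemma conv_expc_hypc_rec (p : C) (m : nat) :
  let U := conv (expc p) hypc in
  let n := RtoC (INR (S (S m))) in
  (n + 1) * (c + n) * U (S (S (S m))) =
  ((a + n) * (b + n) + p * (c + 2 * n)) * U (S (S m))
  - p * (a + b + 2 * n + p - 1) * U (S m) + p ^ 2 * U m.
Proof.
  intros U n. set (N := S (S (S m))).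
  set (e := expc p). set (e1 := fun j => RtoC (INR j) * e j).
  set (e2 := fun j => RtoC (INR j) * (RtoC (INR j) - 1) * e j).
  pose (f := PS_incr_1 hypc : nat -> C).
  assert (f0 : f O = 0) by reflexivity.
  assert (E0 : U (S (S m)) = conv e f N) by (unfold N; now rewrite conv_S_r).
  assert (E1 : p * U (S (S m)) = conv e1 hypc N) by (symmetry; apply conv_index_expc).
  assert (E1' : p * U (S m) = conv e1 f N)
    by (unfold N; rewrite conv_S_r by exact f0; symmetry; apply conv_index_expc).
  assert (E2 : p ^ 2 * U (S m) = conv e2 hypc N) by (symmetry; apply conv_index2_expc).
  assert (E2' : p ^ 2 * U m = conv e2 f N)
    by (unfold N; rewrite conv_S_r by exact f0; symmetry; apply conv_index2_expc).
  set (D := (n + 1) * (c + n)). set (A := (a + n) * (b + n)).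
  assert (termwise : forall j, (j <= N)%nat ->
    D * (e j * hypc (N - j)%nat) + (a + b + 2 * n - 1) * (e1 j * f (N - j)%nat)
      + e2 j * hypc (N - j)%nat
    = A * (e j * f (N - j)%nat) + (c + 2 * n) * (e1 j * hypc (N - j)%nat)
      + e2 j * f (N - j)%nat).
  { intros j hj. set (i := (N - j)%nat).
    assert (Hn : n = RtoC (INR i) + RtoC (INR j) - 1).
    { unfold n. rewrite <- RtoC_plus, <- plus_INR.
      replace (i + j)%nat with (S (S (S m))) by (unfold i, N; lia).
      rewrite !RtoC_INR_S. ring. }
    unfold D, A, e1, e2. rewrite Hn. apply hypc_recurrence_term. }
  assert (Hsum := sum_n_ext_loc _ _ N termwise).
  rewrite !sum_n_Cplus, !sum_n_Cmult_l in Hsum.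
  fold (conv e hypc N) (conv e f N) (conv e1 hypc N) (conv e1 f N) (conv e2 hypc N) (conv e2 f N) in Hsum.
  rewrite <- E0, <- E1, <- E1', <- E2, <- E2' in Hsum.
  change (conv e hypc N) with (U N) in Hsum.
  transitivity (A * U (S (S m)) + (c + 2 * n) * (p * U (S (S m))) + p ^ 2 * U m
    - (a + b + 2 * n - 1) * (p * U (S m)) - p ^ 2 * U (S m)); [rewrite <- Hsum |]; ring.
Qed.

Lemma conv_expc_hypc_step (p : C) (m : nat) :
  let U := conv (expc p) hypc in
  let n := RtoC (INR (S (S m))) in
  U (S (S (S m))) =
  ((a + n) * (b + n) + p * (c + 2 * n)) / ((n + 1) * (c + n)) * U (S (S m))
  - p * (a + b + 2 * n + p - 1) / ((n + 1) * (c + n)) * U (S m)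
  + p ^ 2 / ((n + 1) * (c + n)) * U m.
Proof.
  intros U n. assert (rec := conv_expc_hypc_rec p m). fold U n in rec.
  assert (h1 := RtoC_INR_S_neq0 (S (S m))). assert (h2 := c_plus_INR_neq0 (S (S m))).
  fold n in h1, h2.
  replace (U (S (S (S m)))) with ((n + 1) * (c + n) * U (S (S (S m))) / ((n + 1) * (c + n)))
    by (field; tauto).
  rewrite rec. field. tauto.
Qed.

Lemma useq_conv (p : C) (n : nat) : useq a b c p n = conv (expc p) hypc n.
Proof.
  apply rec3_eq; [apply conv_expc_hypc_0 | apply conv_expc_hypc_1 | apply conv_expc_hypc_2 |].
  intros m. replace (m + 2)%nat with (S (S m)) by lia. apply conv_expc_hypc_step.
Qed.

Lemma vseq_conv (p : C) (n : nat) : vseq a b c p n = conv (expc (- p)) hypc n.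
Proof.
  apply rec3_eq; [apply conv_expc_hypc_0 | rewrite conv_expc_hypc_1 | rewrite conv_expc_hypc_2 |].
  1,2: unfold Cdiv; ring.
  intros m. replace (m + 2)%nat with (S (S m)) by lia.
  rewrite conv_expc_hypc_step. cbv zeta. unfold Cdiv. ring.
Qed.

Lemma hypc_term_ratio (z : C) (n : nat) :
  (Cmod (hypc (S n) * z ^ S n) * (INR (S n) * Cmod (c + RtoC (INR n))))%R
  = (Cmod (a + RtoC (INR n)) * Cmod (b + RtoC (INR n)) * Cmod z * Cmod (hypc n * z ^ n))%R.
Proof.
  assert (E : RtoC (INR (S n)) * (c + RtoC (INR n)) * (hypc (S n) * z ^ S n)
              = (a + RtoC (INR n)) * (b + RtoC (INR n)) * z * (hypc n * z ^ n)).
  { rewrite Cpow_S.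
    transitivity (RtoC (INR (S n)) * (c + RtoC (INR n)) * hypc (S n) * (z * z ^ n)); [ring|].
    rewrite hypc_S. ring. }
  apply (f_equal Cmod) in E. rewrite !Cmod_mult, Cmod_INR in E. rewrite !Cmod_mult, <- E. ring.
Qed.

Lemma ex_series_hypc (z : C) : (Cmod z < 1)%R -> ex_series (fun n => Cmod (hypc n * z ^ n)).
Proof.
  intros hz. set (t := Cmod z) in hz |- *. set (r := ((1 + t) / 2)%R).
  assert (ht : (0 <= t)%R) by apply Cmod_ge_0.
  apply (ex_series_ratio_le _ r); [unfold r; lra | intros n; apply Cmod_ge_0 |].
  assert (htr : (t < r)%R) by (unfold r; lra).
  generalize (eventually_quadratic_le t r (Cmod a) (Cmod b) (Cmod c) htr).
  apply filter_imp. intros n Hn.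
  assert (hpos : (0 < INR (S n) * Cmod (c + RtoC (INR n)))%R).
  { apply Rmult_lt_0_compat; [apply lt_0_INR; lia | apply Cmod_gt_0, c_plus_INR_neq0]. }
  apply (Rmult_le_reg_r _ _ _ hpos). rewrite hypc_term_ratio. fold t.
  set (g := Cmod (hypc n * z ^ n)). assert (hg : (0 <= g)%R) by apply Cmod_ge_0.
  assert (ha := Cmod_plus_INR_le a n). assert (hb := Cmod_plus_INR_le b n).
  assert (hc' := Cmod_plus_INR_ge c n).
  assert (ha0 := Cmod_ge_0 (a + RtoC (INR n))). assert (hb0 := Cmod_ge_0 (b + RtoC (INR n))).
  assert (hn := pos_INR (S n)).
  apply Rle_trans with (t * ((Cmod a + INR n) * (Cmod b + INR n)) * g)%R.
  { apply Rmult_le_compat_r; [exact hg|]. rewrite Rmult_comm.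
    apply Rmult_le_compat_l; [exact ht|]. apply Rmult_le_compat; assumption. }
  apply Rle_trans with (r * (INR (S n) * (INR n - Cmod c)) * g)%R.
  { apply Rmult_le_compat_r; assumption. }
  replace (r * g * (INR (S n) * Cmod (c + RtoC (INR n))))%R
    with (r * (INR (S n) * Cmod (c + RtoC (INR n))) * g)%R by ring.
  apply Rmult_le_compat_r; [exact hg|].
  apply Rmult_le_compat_l; [unfold r; lra|]. apply Rmult_le_compat_l; assumption.
Qed.

End Hypergeometric.

Definition cosh_coef (w : C) (k : nat) : C := (expc w k + expc (- w) k) / 2.

Lemma Cmod_expc (w : C) (k : nat) : Cmod (expc w k) = (Cmod w ^ k / INR (fact k))%R.
Proof.
  unfold expc. rewrite Cmod_div by apply RtoC_INR_fact_neq0.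
  now rewrite Cmod_pow, Cmod_INR.
Qed.

Lemma Cmod_cosh_coef_le (w : C) (k : nat) :
  (Cmod (cosh_coef w k) <= Cmod w ^ k / INR (fact k))%R.
Proof.
  assert (h2 : (2 : C) <> 0) by (intros E; injection E; lra).
  unfold cosh_coef. rewrite Cmod_div by exact h2.
  replace (Cmod 2) with 2%R by (rewrite Cmod_R, Rabs_pos_eq; lra).
  assert (T := Cmod_triangle (expc w k) (expc (- w) k)).
  rewrite !Cmod_expc, Cmod_opp in T. lra.
Qed.

Lemma ex_series_cosh_coef (w : C) : ex_series (fun k => Cmod (cosh_coef w k)).
Proof.
  apply (ex_series_le (V := R_CompleteNormedModule) _ (fun k => Cmod w ^ k / INR (fact k))%R).
  - intros k. unfold norm; simpl. rewrite Rabs_pos_eq by apply Cmod_ge_0.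
    apply Cmod_cosh_coef_le.
  - exists (exp (Cmod w)). eapply is_series_ext; [| exact (is_exp_Reals (Cmod w))].
    intros n. unfold scal; simpl; unfold mult; simpl. rewrite pow_n_pow. unfold Rdiv. ring.
Qed.

Lemma cosh_coef_even (w : C) (k : nat) :
  cosh_coef w (2 * k) = w ^ (2 * k) / RtoC (INR (fact (2 * k))).
Proof.
  unfold cosh_coef, expc. rewrite !Cpow_mult_r.
  replace ((- w) ^ 2) with (w ^ 2) by ring.
  field. apply RtoC_INR_fact_neq0.
Qed.

Lemma cosh_coef_odd (w : C) (k : nat) : cosh_coef w (S (2 * k)) = 0.
Proof.
  unfold cosh_coef, expc. rewrite !Cpow_S, !Cpow_mult_r.
  replace ((- w) ^ 2) with (w ^ 2) by ring.
  field. apply RtoC_INR_fact_neq0.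
Qed.

Lemma sum_n_cosh_coef (w : C) (k : nat) :
  sum_n (cosh_coef w) (S (2 * k))
  = sum_n (fun j => w ^ (2 * j) / RtoC (INR (fact (2 * j)))) k.
Proof.
  induction k as [|k IH].
  - rewrite sum_Sn, !sum_O, cosh_coef_odd, <- cosh_coef_even. apply Cplus_0_r.
  - replace (S (2 * S k)) with (S (S (S (2 * k)))) by lia.
    rewrite (sum_Sn _ (S (S (2 * k)))), (sum_Sn _ (S (2 * k))), (sum_Sn _ k), IH.
    replace (S (S (2 * k))) with (2 * S k)%nat by lia.
    rewrite cosh_coef_odd, cosh_coef_even. apply Cplus_0_r.
Qed.

Lemma is_series_ccosh (w : C) : is_series (V := C_NormedModule) (cosh_coef w) (ccosh w).
Proof.
  assert (H := CSeries_correct _ (ex_series_cosh_coef w)).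
  replace (ccosh w) with (CSeries (cosh_coef w)); [exact H|].
  symmetry. apply CSeries_unique. unfold is_series in *.
  apply (filterlim_ext (fun k => sum_n (cosh_coef w) (S (2 * k)))); [apply sum_n_cosh_coef|].
  apply (filterlim_comp _ _ _ (fun k => S (2 * k)) (sum_n (cosh_coef w)) _ eventually); [|exact H].
  apply eventually_subseq. intros n. lia.
Qed.

Lemma conv_expc_hypc_cosh (a b c p z : C) (n : nat) :
  (conv (expc p) (hypc a b c) n + conv (expc (- p)) (hypc a b c) n) / 2 * z ^ n
  = sum_n (fun j => cosh_coef (p * z) j * (hypc a b c (n - j) * z ^ (n - j))) n.
Proof.
  unfold conv. rewrite <- sum_n_Cplus.
  transitivity (/ 2 * z ^ n * sum_n (fun j => expc p j * hypc a b c (n - j)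
                                         + expc (- p) j * hypc a b c (n - j)) n).
  { unfold Cdiv. ring. }
  rewrite <- sum_n_Cmult_l. apply sum_n_C_ext_loc. intros j hj.
  unfold cosh_coef. replace (- (p * z)) with (- p * z) by ring. rewrite !expc_mult_pow.
  replace (z ^ n) with (z ^ j * z ^ (n - j)) by (rewrite <- Cpow_add_r; f_equal; lia).
  unfold Cdiv. ring.
Qed.

Theorem theorem3p3 (a b c p z : C)
  (hc : forall n : nat, c <> - RtoC (INR n))
  (hz : (Cmod z < 1)%R) :
  is_series (V := C_NormedModule)
    (fun n => (useq a b c p n + vseq a b c p n) / 2 * z ^ n)
    (ccosh (p * z) * hypF a b c z).
Proof.
  set (g := fun n => hypc a b c n * z ^ n).
  assert (Ag : ex_series (fun n => Cmod (g n))) by exact (ex_series_hypc a b c hc z hz).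
  assert (Hg : is_series (V := C_NormedModule) g (hypF a b c z)) by exact (CSeries_correct g Ag).
  eapply is_series_ext;
    [| exact (is_series_C_mult _ _ _ _ (is_series_ccosh (p * z)) Hg (ex_series_cosh_coef _) Ag)].
  intros n. rewrite useq_conv, vseq_conv by exact hc. symmetry. apply conv_expc_hypc_cosh.
Qed.
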